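(* (Passivity of the Soft-PVTOL.) Let $m,m_l,m_r,I,I_l,I_r,l_l,l_r,g_0>0$, let $\tau:[0,T]\to\mathbb{R}^5$ be continuous, and let $\mathbf{q}:[0,T]\to\mathbb{R}^5$ be a $C^2$ solution of $D(\mathbf{q})\ddot{\mathbf{q}}+C(\mathbf{q},\dot{\mathbf{q}})\dot{\mathbf{q}}+g(\mathbf{q})=\tau$. Let $H=\frac12\dot{\mathbf{q}}^{\intercal}D(\mathbf{q})\dot{\mathbf{q}}+\mathcal{P}(\mathbf{q})$ with $\mathcal{P}(\mathbf{q})=g_0\big(\Theta_1z_v+m_ll_l\frac{1-\cos q_l}{q_l}+m_rl_r\frac{1-\cos q_r}{q_r}\big)$. Then $\frac{d}{dt}H(t)=\dot{\mathbf{q}}(t)^{\intercal}\tau(t)$ for all $t\in[0,T]$; consequently $\int_0^T\dot{\mathbf{q}}^{\intercal}\tau\,dt=H(T)-H(0)\ge -H(0)+\min\mathcal{P}$ along the solution, i.e. the map $\tau\mapsto\dot{\mathbf{q}}$ is passive with storage function $H$ (up to the lower bound of $\mathcal{P}$ on the relevant set).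
   Context: Coordinates $\mathbf{q}=(x_v,z_v,\theta,q_l,q_r)^{\intercal}$. Quotients are extended continuously at $q_l=0$ or $q_r=0$ (removable singularities). Set $\Theta_1=m+m_l+m_r$, $\Theta_2=I$, $\Theta_3=l_lm_l$, $\Theta_4=l_rm_r$, $\Theta_5=I_l$, $\Theta_6=I_r$. $\mathscr{D}_1=\frac{\sin q_l-q_l\cos q_l}{q_l^2}$, $\mathscr{D}_2=\frac{\cos q_l+q_l\sin q_l-1}{q_l^2}$, $\mathscr{D}_3=\frac{q_r\cos q_r-\sin q_r}{q_r^2}$, $\mathscr{D}_4=\frac{\cos q_r+q_r\sin q_r-1}{q_r^2}$, $\mathscr{D}_5=\frac{q_l^2+2-2\cos q_l-2q_l\sin q_l}{q_l^4}$, $\mathscr{D}_6=\frac{q_r^2+2-2\cos q_r-2q_r\sin q_r}{q_r^4}$. $$D(\mathbf{q})=\begin{pmatrix}\Theta_1&0&0&\Theta_3\mathscr{D}_1&\Theta_4\mathscr{D}_3\\0&\Theta_1&0&\Theta_3\mathscr{D}_2&\Theta_4\mathscr{D}_4\\0&0&\Theta_2&0&0\\\Theta_3\mathscr{D}_1&\Theta_3\mathscr{D}_2&0&l_l\Theta_3\mathscr{D}_5+\Theta_5&0\\\Theta_4\mathscr{D}_3&\Theta_4\mathscr{D}_4&0&0&l_r\Theta_4\mathscr{D}_6+\Theta_6\end{pmatrix}.$$ $\mathscr{C}_1=\frac{(q_l^2-2)\sin q_l+2q_l\cos q_l}{q_l^3}$, $\mathscr{C}_2=\frac{(q_l^2-2)\cos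 q_l-2q_l\sin q_l+2}{q_l^3}$, $\mathscr{C}_3=\frac{(q_r^2-2)\sin q_r+2q_r\cos q_r}{q_r^3}$, $\mathscr{C}_4=\frac{(q_r^2-2)\cos q_r-2q_r\sin q_r+2}{q_r^3}$, $\mathscr{C}_5=\frac{(q_l\cos(q_l/2)-2\sin(q_l/2))^2}{q_l^5}$, $\mathscr{C}_6=\frac{(q_r\cos(q_r/2)-2\sin(q_r/2))^2}{q_r^5}$. $$C(\mathbf{q},\dot{\mathbf{q}})=\begin{pmatrix}0&0&0&\Theta_3\mathscr{C}_1\dot q_l&-\Theta_4\mathscr{C}_3\dot q_r\\0&0&0&\Theta_3\mathscr{C}_2\dot q_l&\Theta_4\mathscr{C}_4\dot q_r\\0&0&0&0&0\\0&0&0&-2l_l\Theta_3\mathscr{C}_5\dot q_l&0\\0&0&0&0&-2l_r\Theta_4\mathscr{C}_6\dot q_r\end{pmatrix}.$$ $$g(\mathbf{q})=\Big(0,\ g_0\Theta_1,\ 0,\ g_0m_ll_l\tfrac{q_l\sin q_l+\cos q_l-1}{q_l^2},\ g_0m_rl_r\tfrac{q_r\sin q_r+\cos q_r-1}{q_r^2}\Big)^{\intercal}.$$ *)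

From Stdlib Require Import Reals Lra.
From Coquelicot Require Import Coquelicot.
Open Scope R_scope.

(* Vectors of R^5 and 5x5 matrices, indexed by 0..4.
   Coordinates: q 0 = x_v, q 1 = z_v, q 2 = theta, q 3 = q_l, q 4 = q_r. *)
Definition Vec5 := nat -> R.
Definition Mat5 := nat -> nat -> R.

Definition dot5 (u v : Vec5) : R :=
  u 0%nat * v 0%nat + u 1%nat * v 1%nat + u 2%nat * v 2%nat
  + u 3%nat * v 3%nat + u 4%nat * v 4%nat.

Definition mv5 (M : Mat5) (v : Vec5) : Vec5 :=
  fun i => M i 0%nat * v 0%nat + M i 1%nat * v 1%nat + M i 2%nat * v 2%nat
           + M i 3%nat * v 3%nat + M i 4%nat * v 4%nat.

Record params := Params {
  p_m : R; p_ml : R; p_mr : R; p_I : R; p_Il : R; p_Ir : R;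
  p_ll : R; p_lr : R; p_g0 : R }.

Definition params_pos (p : params) : Prop :=
  0 < p_m p /\ 0 < p_ml p /\ 0 < p_mr p /\ 0 < p_I p /\ 0 < p_Il p /\
  0 < p_Ir p /\ 0 < p_ll p /\ 0 < p_lr p /\ 0 < p_g0 p.

Definition Th1 p := p_m p + p_ml p + p_mr p.
Definition Th2 p := p_I p.
Definition Th3 p := p_ll p * p_ml p.
Definition Th4 p := p_lr p * p_mr p.
Definition Th5 p := p_Il p.
Definition Th6 p := p_Ir p.

(* Quotients, extended continuously at 0 (removable singularities). *)
Definition ext0 (v0 : R) (f : R -> R) (q : R) : R :=
  if Req_EM_T q 0 then v0 else f q.

Definition Dl1 := ext0 0 (fun q => (sin q - q * cos q) / q ^ 2).
Definition Dl2 := ext0 (1/2) (fun q => (cos q + q * sin q - 1) / q ^ 2).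
Definition Dl3 := ext0 0 (fun q => (q * cos q - sin q) / q ^ 2).
Definition Dl4 := ext0 (1/2) (fun q => (cos q + q * sin q - 1) / q ^ 2).
Definition Dl5 := ext0 (1/4) (fun q => (q ^ 2 + 2 - 2 * cos q - 2 * q * sin q) / q ^ 4).
Definition Dl6 := Dl5.

Definition Cl1 := ext0 (1/3) (fun q => ((q ^ 2 - 2) * sin q + 2 * q * cos q) / q ^ 3).
Definition Cl2 := ext0 0 (fun q => ((q ^ 2 - 2) * cos q - 2 * q * sin q + 2) / q ^ 3).
Definition Cl3 := Cl1.
Definition Cl4 := Cl2.
Definition Cl5 := ext0 0 (fun q => (q * cos (q / 2) - 2 * sin (q / 2)) ^ 2 / q ^ 5).
Definition Cl6 := Cl5.

Definition Gq := ext0 (1/2) (fun q => (q * sin q + cos q - 1) / q ^ 2).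
Definition Pq := ext0 0 (fun q => (1 - cos q) / q).

Definition Dmat (p : params) (q : Vec5) : Mat5 :=
  let ql := q 3%nat in let qr := q 4%nat in
  fun i j =>
  match i, j with
  | 0%nat, 0%nat => Th1 p | 0%nat, 3%nat => Th3 p * Dl1 ql | 0%nat, 4%nat => Th4 p * Dl3 qr
  | 1%nat, 1%nat => Th1 p | 1%nat, 3%nat => Th3 p * Dl2 ql | 1%nat, 4%nat => Th4 p * Dl4 qr
  | 2%nat, 2%nat => Th2 p
  | 3%nat, 0%nat => Th3 p * Dl1 ql | 3%nat, 1%nat => Th3 p * Dl2 ql
  | 3%nat, 3%nat => p_ll p * Th3 p * Dl5 ql + Th5 p
  | 4%nat, 0%nat => Th4 p * Dl3 qr | 4%nat, 1%nat => Th4 p * Dl4 qr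
  | 4%nat, 4%nat => p_lr p * Th4 p * Dl6 qr + Th6 p
  | _, _ => 0
  end.

Definition Cmat (p : params) (q dq : Vec5) : Mat5 :=
  let ql := q 3%nat in let qr := q 4%nat in
  let dql := dq 3%nat in let dqr := dq 4%nat in
  fun i j =>
  match i, j with
  | 0%nat, 3%nat => Th3 p * Cl1 ql * dql | 0%nat, 4%nat => - (Th4 p * Cl3 qr * dqr)
  | 1%nat, 3%nat => Th3 p * Cl2 ql * dql | 1%nat, 4%nat => Th4 p * Cl4 qr * dqr
  | 3%nat, 3%nat => - (2 * p_ll p * Th3 p * Cl5 ql * dql)
  | 4%nat, 4%nat => - (2 * p_lr p * Th4 p * Cl6 qr * dqr)
  | _, _ => 0
  end.

Definition gvec (p : params) (q : Vec5) : Vec5 :=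
  fun i =>
  match i with
  | 1%nat => p_g0 p * Th1 p
  | 3%nat => p_g0 p * p_ml p * p_ll p * Gq (q 3%nat)
  | 4%nat => p_g0 p * p_mr p * p_lr p * Gq (q 4%nat)
  | _ => 0
  end.

Definition Pot (p : params) (q : Vec5) : R :=
  p_g0 p * (Th1 p * q 1%nat + p_ml p * p_ll p * Pq (q 3%nat)
            + p_mr p * p_lr p * Pq (q 4%nat)).

Definition Ham (p : params) (q dq : Vec5) : R :=
  / 2 * dot5 dq (mv5 (Dmat p q) dq) + Pot p q.

(* Derivative of f at x relative to a domain S (one-sided at endpoints of an
   interval). *)
Definition has_deriv_within (S : R -> Prop) (f : R -> R) (l x : R) : Prop :=
  forall eps, 0 < eps -> exists delta, 0 < delta /\
    forall y, S y -> Rabs (y - x) < delta ->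
      Rabs (f y - f x - l * (y - x)) <= eps * Rabs (y - x).

Definition cont_within (S : R -> Prop) (f : R -> R) (x : R) : Prop :=
  forall eps, 0 < eps -> exists delta, 0 < delta /\
    forall y, S y -> Rabs (y - x) < delta -> Rabs (f y - f x) < eps.

Definition Icc (a b : R) : R -> Prop := fun t => a <= t <= b.

From Stdlib Require Import Reals Lra Lia Psatz.
From Coquelicot Require Import Coquelicot.
Open Scope R_scope.

(* Along a motion, dH/dt = dq.D(q)ddq + 1/2 dq.(dD/dt)dq + grad P.dq.  The gravity
   vector is grad P, because G is the derivative of the quotient (1 - cos x)/x, and
   dq.C dq = 1/2 dq.(dD/dt)dq, because the C-quotients are the derivatives of the
   D-quotients (C5 up to the factor -1/4).  Hence dH/dt = dq.(D ddq + C dq + g) = dq.tau.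
   At the removable singularity x = 0 these derivatives come from Taylor bounds on sin
   and cos.  Integrating gives the energy identity, and the lower bound holds because
   D5 = D1^2 + D2^2 makes 1/2 dq.D dq a sum of kinetic energies. *)

Lemma is_derive_eq (f : R -> R) (x l l' : R) : is_derive f x l -> l = l' -> is_derive f x l'.
Proof. now intros Hf <-. Qed.

Lemma is_derive_Rplus (f g : R -> R) (x df dg : R) :
  is_derive f x df -> is_derive g x dg -> is_derive (fun s => f s + g s) x (df + dg).
Proof. intros; now apply (is_derive_plus f g). Qed.

Ltac split_derive_sum :=
  repeat match goal with |- is_derive (fun s => _ + _) _ _ => apply is_derive_Rplus end.

Lemma is_derive_scal_comp (c : R) (f df g : R -> R) x dg :
  (forall y, is_derive f y (df y)) -> is_derive g x dg ->
  is_derive (fun s => c * f (g s)) x (c * df (g x) * dg).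
Proof.
  intros Hf Hg; eapply is_derive_eq.
  - apply is_derive_scal, (is_derive_comp f g); [apply Hf|exact Hg].
  - unfold scal; simpl; unfold mult; simpl; ring.
Qed.

Lemma is_derive_of_eps_delta f x l :
  (forall eps, 0 < eps -> exists delta, 0 < delta /\ forall y, Rabs (y - x) < delta ->
     Rabs (f y - f x - l * (y - x)) <= eps * Rabs (y - x)) ->
  is_derive f x l.
Proof.
  intros Hfx; apply is_derive_Reals; intros eps Heps.
  destruct (Hfx (eps / 2)) as [d [Hd Hy]]; [lra|].
  exists (mkposreal d Hd); intros h Hh Hhd; simpl in Hhd.
  specialize (Hy (x + h)); replace (x + h - x) with h in Hy by ring.
  specialize (Hy Hhd).
  replace ((f (x + h) - f x) / h - l) with ((f (x + h) - f x - l * h) / h) by (field; auto).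
  rewrite Rabs_div by auto.
  apply Rcomplements.Rlt_div_l; [apply Rabs_pos_lt; auto|].
  pose proof (Rabs_pos_lt h Hh); nra.
Qed.

Lemma is_derive_of_quadratic_remainder f x l K : 0 < K ->
  (forall h, h <> 0 -> Rabs h <= 1 -> Rabs (f (x + h) - f x - l * h) <= K * h^2) ->
  is_derive f x l.
Proof.
  intros HK Hrem; apply is_derive_of_eps_delta; intros eps Heps.
  exists (Rmin 1 (eps / K)); split.
  { apply Rmin_pos; [lra|apply Rdiv_lt_0_compat; lra]. }
  intros y Hy; destruct (Req_dec y x) as [->|Hne].
  { rewrite !Rminus_diag, Rmult_0_r, Rminus_0_r, Rabs_R0; lra. }
  pose proof (Rmin_l 1 (eps / K)); pose proof (Rmin_r 1 (eps / K)).
  assert (Hle : Rabs (y - x) <= eps / K) by lra.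
  apply Rcomplements.Rle_div_r in Hle; [|lra].
  specialize (Hrem (y - x) ltac:(lra) ltac:(lra)).
  replace (x + (y - x)) with y in Hrem by ring.
  rewrite <- (pow2_abs (y - x)) in Hrem.
  pose proof (Rabs_pos (y - x)); nra.
Qed.

Lemma has_deriv_within_of_is_derive S f x l : is_derive f x l -> has_deriv_within S f l x.
Proof.
  intros Hf; apply is_derive_Reals in Hf; intros eps Heps.
  destruct (Hf eps Heps) as [d Hd]; exists d; split; [apply cond_pos|].
  intros y _ Hy; destruct (Req_dec y x) as [->|Hne].
  { rewrite !Rminus_diag, Rmult_0_r, Rminus_0_r, Rabs_R0; lra. }
  specialize (Hd (y - x) ltac:(lra)); replace (x + (y - x)) with y in Hd by ring.
  specialize (Hd Hy).
  replace (f y - f x - l * (y - x)) with (((f y - f x) / (y - x) - l) * (y - x))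
    by (field; lra).
  rewrite Rabs_mult; pose proof (Rabs_pos (y - x)); nra.
Qed.

Lemma has_deriv_within_ext S (f g : R -> R) l x :
  (forall y, S y -> f y = g y) -> S x -> has_deriv_within S f l x -> has_deriv_within S g l x.
Proof.
  intros Hfg Sx Hf eps Heps; destruct (Hf eps Heps) as [d [Hd Hy]].
  exists d; split; [exact Hd|]; intros y Sy Hyx.
  rewrite <- (Hfg y Sy), <- (Hfg x Sx); apply Hy; auto.
Qed.

Lemma cont_within_of_has_deriv_within S f l x : has_deriv_within S f l x -> cont_within S f x.
Proof.
  intros Hf eps Heps; destruct (Hf 1 ltac:(lra)) as [d [Hd Hy]].
  assert (Hl : 0 < Rabs l + 1) by (pose proof (Rabs_pos l); lra).
  exists (Rmin d (eps / (Rabs l + 1))); split.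
  { apply Rmin_pos; [lra|apply Rdiv_lt_0_compat; lra]. }
  intros y Sy Hyx.
  pose proof (Rmin_l d (eps / (Rabs l + 1))); pose proof (Rmin_r d (eps / (Rabs l + 1))).
  specialize (Hy y Sy ltac:(lra)).
  assert (Rabs (y - x) * (Rabs l + 1) < eps) by (apply Rcomplements.Rlt_div_r; lra).
  replace (f y - f x) with ((f y - f x - l * (y - x)) + l * (y - x)) by ring.
  eapply Rle_lt_trans; [apply Rabs_triang|]; rewrite Rabs_mult.
  pose proof (Rabs_pos (y - x)); pose proof (Rabs_pos l); nra.
Qed.

(** * Taylor bounds for sin and cos *)

Lemma sin_cos_approx_low_order h :
  sin_approx h 1 = h - h^3/6 /\ sin_approx h 2 = h - h^3/6 + h^5/120 /\
  cos_approx h 1 = 1 - h^2/2 /\ cos_approx h 2 = 1 - h^2/2 + h^4/24 /\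
  cos_approx h 3 = 1 - h^2/2 + h^4/24 - h^6/720.
Proof.
  unfold sin_approx, cos_approx, sin_term, cos_term.
  simpl sum_f_R0; simpl Factorial.fact; simpl mult.
  repeat split; field.
Qed.

Lemma sin_taylor_nonneg h : 0 <= h <= 1 -> 0 <= sin h - (h - h^3/6) <= h^5/120.
Proof.
  intros Hh.
  destruct (sin_cos_approx_low_order h) as (S1 & S2 & _).
  assert (H1PI : 1 <= PI) by (pose proof PI2_1; pose proof PI2_Rlt_PI; lra).
  destruct (sin_bound h 0) as [Hlo Hhi]; [lra|lra|].
  simpl in Hlo, Hhi; rewrite S1 in Hlo; rewrite S2 in Hhi; lra.
Qed.

Lemma sin_taylor_bound h : Rabs h <= 1 -> Rabs (sin h - (h - h^3/6)) <= Rabs h ^ 5 / 120.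
Proof.
  intros Hh; apply Rabs_le.
  destruct (Rle_dec 0 h).
  - rewrite Rabs_right in * by lra; pose proof (sin_taylor_nonneg h); lra.
  - rewrite Rabs_left in * by lra; pose proof (sin_taylor_nonneg (- h)) as Hneg.
    rewrite sin_neg in Hneg; replace ((- h) ^ 3) with (- h ^ 3) in Hneg by ring; lra.
Qed.

Lemma cos_taylor2_bound h : Rabs h <= 1 -> 0 <= cos h - (1 - h^2/2) <= h^4/24.
Proof.
  intros Hh; apply Rabs_le_between in Hh; pose proof PI2_1.
  destruct (sin_cos_approx_low_order h) as (_ & _ & C1 & C2 & _).
  destruct (cos_bound h 0) as [Hlo Hhi]; [lra|lra|].
  simpl in Hlo, Hhi; rewrite C1 in Hlo; rewrite C2 in Hhi; lra.
Qed.

Lemma cos_taylor4_bound h :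
  Rabs h <= 1 -> - (h^6/720) <= cos h - (1 - h^2/2 + h^4/24) <= 0.
Proof.
  intros Hh; apply Rabs_le_between in Hh; pose proof PI2_1.
  destruct (sin_cos_approx_low_order h) as (_ & _ & _ & C2 & C3).
  destruct (cos_bound h 0) as [_ Hhi]; [lra|lra|].
  destruct (cos_bound h 1) as [Hlo _]; [lra|lra|].
  simpl in Hlo, Hhi; rewrite C3 in Hlo; rewrite C2 in Hhi; lra.
Qed.

(** * The quotients with a removable singularity *)

Lemma ext0_neq v0 f x : x <> 0 -> ext0 v0 f x = f x.
Proof. intros Hx; unfold ext0; destruct (Req_EM_T x 0); [contradiction|reflexivity]. Qed.

Lemma ext0_0 v0 f : ext0 v0 f 0 = v0.
Proof. unfold ext0; destruct (Req_EM_T 0 0); [reflexivity|contradiction]. Qed.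

Lemma is_derive_ext0_neq v0 f x l : x <> 0 -> is_derive f x l -> is_derive (ext0 v0 f) x l.
Proof.
  intros Hx Hf; apply (is_derive_ext_loc f); [|exact Hf].
  assert (Hpos : 0 < Rabs x) by (apply Rabs_pos_lt; auto).
  exists (mkposreal _ Hpos); intros y Hy; simpl in Hy.
  rewrite ext0_neq; [reflexivity|]; intros ->.
  unfold ball in Hy; simpl in Hy; unfold AbsRing_ball, abs, minus, plus, opp in Hy; simpl in Hy.
  rewrite Rplus_0_l, Rabs_Ropp in Hy; lra.
Qed.

Lemma Rabs_div_pow_le X h n K :
  h <> 0 -> Rabs X <= K * (Rabs h ^ n * h^2) -> Rabs (X / h^n) <= K * h^2.
Proof.
  intros Hh HX; rewrite Rabs_div, <- RPow_abs by (apply pow_nonzero; auto).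
  apply Rcomplements.Rle_div_l; [apply pow_lt, Rabs_pos_lt; auto|lra].
Qed.

Ltac quotient_derive :=
  auto_derive;
  [repeat split; auto; repeat apply Rmult_integral_contrapositive_currified; auto with real|].

Lemma is_derive_Dl1 x : is_derive Dl1 x (Cl1 x).
Proof.
  destruct (Req_dec x 0) as [->|Hx].
  - unfold Cl1; rewrite ext0_0.
    apply (is_derive_of_quadratic_remainder _ _ _ 1); [lra|]; intros h Hh Hh1.
    unfold Dl1; rewrite Rplus_0_l, ext0_neq, ext0_0 by auto.
    replace ((sin h - h * cos h) / h ^ 2 - 0 - 1/3 * h)
      with ((sin h - h * cos h - h^3/3) / h ^ 2) by (field; auto).
    apply Rabs_div_pow_le; auto.
    pose proof (sin_taylor_bound h Hh1); pose proof (cos_taylor2_bound h Hh1).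
    replace (sin h - h * cos h - h^3/3)
      with ((sin h - (h - h^3/6)) - h * (cos h - (1 - h^2/2))) by field.
    eapply Rle_trans; [apply Rabs_triang|]; rewrite Rabs_Ropp, Rabs_mult.
    rewrite (Rabs_right (cos h - _)) by lra.
    rewrite <- (pow2_abs h) in *.
    replace (h^4) with ((Rabs h ^ 2) ^ 2) in * by (rewrite pow2_abs; ring).
    pose proof (Rabs_pos h); pose proof (pow_le (Rabs h) 4 (Rabs_pos h)).
    assert (Rabs h ^ 5 <= Rabs h ^ 4) by (rewrite <- tech_pow_Rmult; nra).
    nra.
  - unfold Dl1, Cl1; rewrite ext0_neq by auto; apply is_derive_ext0_neq; auto.
    quotient_derive; field; auto.
Qed.

Lemma is_derive_Dl2 x : is_derive Dl2 x (Cl2 x).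
Proof.
  destruct (Req_dec x 0) as [->|Hx].
  - unfold Cl2; rewrite ext0_0.
    apply (is_derive_of_quadratic_remainder _ _ _ 1); [lra|]; intros h Hh Hh1.
    unfold Dl2; rewrite Rplus_0_l, ext0_neq, ext0_0 by auto.
    replace ((cos h + h * sin h - 1) / h ^ 2 - 1/2 - 0 * h)
      with ((cos h + h * sin h - 1 - h^2/2) / h ^ 2) by (field; auto).
    apply Rabs_div_pow_le; auto.
    pose proof (sin_taylor_bound h Hh1); pose proof (cos_taylor2_bound h Hh1).
    replace (cos h + h * sin h - 1 - h^2/2)
      with ((cos h - (1 - h^2/2)) + h * (sin h - (h - h^3/6)) - h^4/6) by field.
    eapply Rle_trans; [apply Rabs_triang|].
    eapply Rle_trans; [apply Rplus_le_compat_r, Rabs_triang|].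
    rewrite Rabs_Ropp, Rabs_mult, (Rabs_right (cos h - _)) by lra.
    rewrite <- (pow2_abs h) in *.
    replace (h^4) with ((Rabs h ^ 2) ^ 2) in * by (rewrite pow2_abs; ring).
    rewrite (Rabs_right ((Rabs h ^ 2) ^ 2 / 6))
      by (apply Rle_ge, Rcomplements.Rdiv_le_0_compat; [apply pow2_ge_0|lra]).
    pose proof (Rabs_pos h); pose proof (pow_le (Rabs h) 4 (Rabs_pos h)).
    assert (Rabs h ^ 2 <= 1) by nra.
    assert (Rabs h ^ 6 <= Rabs h ^ 4)
      by (replace (Rabs h ^ 6) with (Rabs h ^ 2 * Rabs h ^ 4) by ring; nra).
    nra.
  - unfold Dl2, Cl2; rewrite ext0_neq by auto; apply is_derive_ext0_neq; auto.
    quotient_derive; field; auto.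
Qed.

Lemma is_derive_Pq x : is_derive Pq x (Gq x).
Proof.
  destruct (Req_dec x 0) as [->|Hx].
  - unfold Gq; rewrite ext0_0.
    apply (is_derive_of_quadratic_remainder _ _ _ 1); [lra|]; intros h Hh Hh1.
    unfold Pq; rewrite Rplus_0_l, ext0_neq, ext0_0 by auto.
    replace ((1 - cos h) / h - 0 - 1/2 * h) with (- (cos h - (1 - h^2/2)) / h ^ 1) by (field; auto).
    apply Rabs_div_pow_le; auto.
    pose proof (cos_taylor2_bound h Hh1).
    rewrite Rabs_Ropp, (Rabs_right (cos h - _)) by lra.
    rewrite <- (pow2_abs h) in *.
    replace (h^4) with ((Rabs h ^ 2) ^ 2) in * by (rewrite pow2_abs; ring).
    pose proof (Rabs_pos h); pose proof (pow_le (Rabs h) 3 (Rabs_pos h)).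
    replace ((Rabs h ^ 2) ^ 2) with (Rabs h ^ 3 * Rabs h) in * by ring; nra.
  - unfold Pq, Gq; rewrite ext0_neq by auto; apply is_derive_ext0_neq; auto.
    quotient_derive; field; auto.
Qed.

Lemma half_angle_square x :
  (x * cos (x/2) - 2 * sin (x/2))^2 = x^2 * (1 + cos x) / 2 - 2 * x * sin x + 2 * (1 - cos x).
Proof.
  assert (Hx : x = 2 * (x/2)) by field.
  assert (Hcos : cos x = cos (x/2) * cos (x/2) - sin (x/2) * sin (x/2))
    by (rewrite <- cos_2a; f_equal; exact Hx).
  assert (Hsin : sin x = 2 * sin (x/2) * cos (x/2)) by (rewrite <- sin_2a; f_equal; exact Hx).
  pose proof (sin2_cos2 (x/2)) as Hpyth; unfold Rsqr in Hpyth.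
  rewrite Hcos, Hsin; set (s := sin (x/2)) in *; set (c := cos (x/2)) in *.
  replace (x ^ 2 * (1 + (c * c - s * s)) / 2 - 2 * x * (2 * s * c) + 2 * (1 - (c * c - s * s)))
    with ((x * c - 2 * s) ^ 2 + (1 - (s * s + c * c)) * (x^2 / 2 + 2)) by field.
  rewrite Hpyth; ring.
Qed.

Lemma is_derive_Dl5 x : is_derive Dl5 x (-4 * Cl5 x).
Proof.
  destruct (Req_dec x 0) as [->|Hx].
  - unfold Cl5; rewrite ext0_0.
    apply (is_derive_of_quadratic_remainder _ _ _ 1); [lra|]; intros h Hh Hh1.
    unfold Dl5; rewrite Rplus_0_l, ext0_neq, ext0_0 by auto.
    replace ((h ^ 2 + 2 - 2 * cos h - 2 * h * sin h) / h ^ 4 - 1/4 - (-4 * 0) * h)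
      with ((h ^ 2 + 2 - 2 * cos h - 2 * h * sin h - h^4/4) / h ^ 4) by (field; auto).
    apply Rabs_div_pow_le; auto.
    pose proof (sin_taylor_bound h Hh1); pose proof (cos_taylor4_bound h Hh1).
    replace (h ^ 2 + 2 - 2 * cos h - 2 * h * sin h - h^4/4)
      with (- (2 * (cos h - (1 - h^2/2 + h^4/24))) - 2 * h * (sin h - (h - h^3/6))) by field.
    eapply Rle_trans; [apply Rabs_triang|]; rewrite !Rabs_Ropp, !Rabs_mult.
    rewrite (Rabs_right 2), (Rabs_left1 (cos h - _)) by lra.
    rewrite <- (pow2_abs h) in *.
    replace (h^6) with ((Rabs h ^ 2) ^ 3) in * by (rewrite pow2_abs; ring).
    replace ((Rabs h ^ 2) ^ 3) with (Rabs h ^ 4 * Rabs h ^ 2) in * by ring.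
    assert (Rabs h * Rabs (sin h - (h - h^3/6)) <= Rabs h * (Rabs h ^ 5 / 120))
      by (apply Rmult_le_compat_l; [apply Rabs_pos|assumption]).
    replace (Rabs h * (Rabs h ^ 5 / 120)) with (Rabs h ^ 4 * Rabs h ^ 2 / 120) in * by field.
    pose proof (pow_le (Rabs h) 4 (Rabs_pos h)); pose proof (pow_le (Rabs h) 2 (Rabs_pos h)).
    nra.
  - unfold Dl5, Cl5; rewrite ext0_neq by auto; apply is_derive_ext0_neq; auto.
    quotient_derive; rewrite half_angle_square; field; auto.
Qed.

Lemma Dl3_opp_Dl1 x : Dl3 x = - Dl1 x.
Proof. unfold Dl3, Dl1, ext0; destruct (Req_EM_T x 0); [ring|field; auto]. Qed.

Lemma is_derive_Dl3 x : is_derive Dl3 x (- Cl3 x).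
Proof.
  apply (is_derive_ext (fun y => - Dl1 y)); [intros; symmetry; apply Dl3_opp_Dl1|].
  apply (is_derive_opp Dl1), is_derive_Dl1.
Qed.

Lemma Dl5_sum_squares x : Dl5 x = Dl1 x ^ 2 + Dl2 x ^ 2.
Proof.
  unfold Dl5, Dl1, Dl2, ext0; destruct (Req_EM_T x 0); [field|].
  pose proof (sin2_cos2 x) as Hpyth; unfold Rsqr in Hpyth.
  replace (((sin x - x * cos x) / x ^ 2) ^ 2 + ((cos x + x * sin x - 1) / x ^ 2) ^ 2)
    with ((x ^ 2 + 2 - 2 * cos x - 2 * x * sin x
           + (sin x * sin x + cos x * cos x - 1) * (1 + x^2)) / x ^ 4) by (field; auto).
  rewrite Hpyth; field; auto.
Qed.

(** * Energy balance *)

Lemma is_derive_dot5 (u v : R -> Vec5) (du dv : Vec5) t :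
  (forall i, (i < 5)%nat -> is_derive (fun s => u s i) t (du i)) ->
  (forall i, (i < 5)%nat -> is_derive (fun s => v s i) t (dv i)) ->
  is_derive (fun s => dot5 (u s) (v s)) t (dot5 du (v t) + dot5 (u t) dv).
Proof.
  intros Hu Hv; unfold dot5; eapply is_derive_eq.
  - split_derive_sum; (apply Derive.is_derive_mult; [apply Hu|apply Hv]); lia.
  - cbv beta; ring.
Qed.

Lemma is_derive_mv5 (M : R -> Mat5) (v : R -> Vec5) (dM : Mat5) (dv : Vec5) t i :
  (forall j, (j < 5)%nat -> is_derive (fun s => M s i j) t (dM i j)) ->
  (forall j, (j < 5)%nat -> is_derive (fun s => v s j) t (dv j)) ->
  is_derive (fun s => mv5 (M s) (v s) i) t (mv5 dM (v t) i + mv5 (M t) dv i).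
Proof.
  intros HM Hv; unfold mv5; eapply is_derive_eq.
  - split_derive_sum; (apply Derive.is_derive_mult; [apply HM|apply Hv]); lia.
  - cbv beta; ring.
Qed.

(* [dD/dt] along a motion through [q] with velocity [dq]. *)
Definition Ddot (p : params) (q dq : Vec5) : Mat5 :=
  let ql := q 3%nat in let qr := q 4%nat in
  let dql := dq 3%nat in let dqr := dq 4%nat in
  fun i j =>
  match i, j with
  | 0%nat, 3%nat | 3%nat, 0%nat => Th3 p * Cl1 ql * dql
  | 0%nat, 4%nat | 4%nat, 0%nat => - (Th4 p * Cl3 qr * dqr)
  | 1%nat, 3%nat | 3%nat, 1%nat => Th3 p * Cl2 ql * dql
  | 1%nat, 4%nat | 4%nat, 1%nat => Th4 p * Cl4 qr * dqr
  | 3%nat, 3%nat => - (4 * p_ll p * Th3 p * Cl5 ql * dql)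
  | 4%nat, 4%nat => - (4 * p_lr p * Th4 p * Cl6 qr * dqr)
  | _, _ => 0
  end.

Ltac derivative_lemma f :=
  lazymatch f with
  | Dl1 => constr:(is_derive_Dl1) | Dl2 => constr:(is_derive_Dl2)
  | Dl3 => constr:(is_derive_Dl3) | Dl4 => constr:(is_derive_Dl2)
  | Dl5 => constr:(is_derive_Dl5) | Dl6 => constr:(is_derive_Dl5)
  end.

Ltac derive_entry HQ :=
  lazymatch goal with
  | |- is_derive (fun _ => ?c) _ _ => apply is_derive_const
  | |- is_derive (fun s => ?c * ?f (_ s ?k)) _ _ =>
      let Hf := derivative_lemma f in
      apply is_derive_scal_comp; [exact Hf | apply HQ; lia]
  | |- is_derive (fun s => ?c * ?f (_ s ?k) + _) _ _ =>
      let Hf := derivative_lemma f in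
      apply is_derive_Rplus; [|apply is_derive_const];
      apply is_derive_scal_comp; [exact Hf | apply HQ; lia]
  end.

Lemma is_derive_Dmat p (Q : R -> Vec5) (dQ : Vec5) t :
  (forall i, (i < 5)%nat -> is_derive (fun s => Q s i) t (dQ i)) ->
  forall i j, is_derive (fun s => Dmat p (Q s) i j) t (Ddot p (Q t) dQ i j).
Proof.
  intros HQ i j.
  destruct i as [|[|[|[|[|i]]]]]; destruct j as [|[|[|[|[|j]]]]]; cbn [Dmat Ddot].
  all: eapply is_derive_eq; [derive_entry HQ | cbv beta; unfold zero, plus, Cl4, Cl6; simpl; ring].
Qed.

Lemma Dmat_form_sym p q u v : dot5 u (mv5 (Dmat p q) v) = dot5 v (mv5 (Dmat p q) u).
Proof. unfold dot5, mv5, Dmat; cbv beta iota zeta; ring. Qed.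

(* The quadratic-form version of the skew-symmetry of [dD/dt - 2 C]. *)
Lemma Cmat_form_half_Ddot p q v :
  dot5 v (mv5 (Cmat p q v) v) = / 2 * dot5 v (mv5 (Ddot p q v) v).
Proof. unfold dot5, mv5, Cmat, Ddot; cbv beta iota zeta; field. Qed.

Lemma is_derive_Pot p (Q : R -> Vec5) (dQ : Vec5) t :
  (forall i, (i < 5)%nat -> is_derive (fun s => Q s i) t (dQ i)) ->
  is_derive (fun s => Pot p (Q s)) t (dot5 dQ (gvec p (Q t))).
Proof.
  intros HQ; unfold Pot; eapply is_derive_eq.
  - apply is_derive_scal; split_derive_sum;
      [apply is_derive_scal | apply is_derive_scal_comp | apply is_derive_scal_comp];
      solve [apply HQ; lia | exact is_derive_Pq].
  - unfold dot5, gvec; cbv beta; ring.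
Qed.

Lemma is_derive_Ham p (Q V : R -> Vec5) (dV : Vec5) t :
  (forall i, (i < 5)%nat -> is_derive (fun s => Q s i) t (V t i)) ->
  (forall i, (i < 5)%nat -> is_derive (fun s => V s i) t (dV i)) ->
  is_derive (fun s => Ham p (Q s) (V s)) t
    (dot5 (V t) (mv5 (Dmat p (Q t)) dV) + dot5 (V t) (mv5 (Cmat p (Q t) (V t)) (V t))
     + dot5 (V t) (gvec p (Q t))).
Proof.
  intros HQ HV; unfold Ham; eapply is_derive_eq.
  - apply is_derive_Rplus; [apply is_derive_scal|apply is_derive_Pot; exact HQ].
    apply is_derive_dot5; [exact HV|]; intros i _.
    apply is_derive_mv5; [intros j _; apply is_derive_Dmat; exact HQ | exact HV].
  - cbv beta; rewrite (Dmat_form_sym p (Q t) dV (V t)), Cmat_form_half_Ddot.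
    unfold dot5; field.
Qed.

Lemma power_balance p q v a tau :
  (forall i, (i < 5)%nat -> mv5 (Dmat p q) a i + mv5 (Cmat p q v) v i + gvec p q i = tau i) ->
  dot5 v (mv5 (Dmat p q) a) + dot5 v (mv5 (Cmat p q v) v) + dot5 v (gvec p q) = dot5 v tau.
Proof.
  intros Heom; unfold dot5.
  rewrite <- (Heom 0%nat), <- (Heom 1%nat), <- (Heom 2%nat), <- (Heom 3%nat), <- (Heom 4%nat)
    by lia.
  ring.
Qed.

(* With [Dl3 = - Dl1] and [Dl5 = Dl1^2 + Dl2^2], the quadratic form splits into the
   kinetic energies of the three point masses plus the three rotational terms. *)
Lemma Dmat_form_nonneg p q v : params_pos p -> 0 <= dot5 v (mv5 (Dmat p q) v).
Proof.
  intros (Hm & Hml & Hmr & HI & HIl & HIr & _).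
  unfold dot5, mv5, Dmat; cbv beta iota zeta.
  rewrite Dl3_opp_Dl1; change Dl4 with Dl2; change Dl6 with Dl5; rewrite !Dl5_sum_squares.
  unfold Th1, Th2, Th3, Th4, Th5, Th6.
  set (d1 := Dl1 (q 3%nat)); set (d2 := Dl2 (q 3%nat)).
  set (e1 := Dl1 (q 4%nat)); set (e2 := Dl2 (q 4%nat)).
  set (ll := p_ll p); set (lr := p_lr p).
  set (v0 := v 0%nat); set (v1 := v 1%nat); set (v2 := v 2%nat).
  set (v3 := v 3%nat); set (v4 := v 4%nat).
  match goal with |- 0 <= ?form =>
    replace form with
      (p_m p * (v0^2 + v1^2)
       + p_ml p * ((v0 + ll * v3 * d1)^2 + (v1 + ll * v3 * d2)^2)
       + p_mr p * ((v0 - lr * v4 * e1)^2 + (v1 + lr * v4 * e2)^2)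
       + p_I p * v2^2 + p_Il p * v3^2 + p_Ir p * v4^2) by ring
  end.
  repeat apply Rplus_le_le_0_compat; apply Rmult_le_pos; try lra;
    repeat apply Rplus_le_le_0_compat; apply pow2_ge_0.
Qed.

(** * From [0, T] to the real line *)

(* Continuation of a curve outside [0, T] by its tangent lines at the endpoints, which
   turns one-sided derivatives at [0] and [T] into two-sided ones. *)
Definition tangent_extension (T : R) (f df : R -> Vec5) (t : R) : Vec5 :=
  if Rlt_dec t 0 then fun i => f 0 i + df 0 i * t
  else if Rlt_dec T t then fun i => f T i + df T i * (t - T) else f t.

Lemma tangent_extension_in T f df t : Icc 0 T t -> tangent_extension T f df t = f t.
Proof.
  intros [H0 HT]; unfold tangent_extension.
  destruct (Rlt_dec t 0); [lra|]; destruct (Rlt_dec T t); [lra|reflexivity].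
Qed.

Lemma Icc_boundary_nbhd T x : 0 < T -> Icc 0 T x ->
  exists r, 0 < r /\ forall y, Rabs (y - x) < r -> (y < 0 -> x = 0) /\ (T < y -> x = T).
Proof.
  intros HT [Hx0 HxT].
  destruct (Req_dec x 0) as [->|Hx0']; [|destruct (Req_dec x T) as [->|HxT']].
  - exists T; split; [lra|]; intros y Hy; apply Rabs_lt_between in Hy; lra.
  - exists T; split; [lra|]; intros y Hy; apply Rabs_lt_between in Hy; lra.
  - exists (Rmin x (T - x)); split; [apply Rmin_pos; lra|].
    intros y Hy; apply Rabs_lt_between in Hy.
    pose proof (Rmin_l x (T - x)); pose proof (Rmin_r x (T - x)); lra.
Qed.

Lemma is_derive_tangent_extension T (f df : R -> Vec5) i x : 0 < T ->
  (forall y, Icc 0 T y -> has_deriv_within (Icc 0 T) (fun s => f s i) (df y i) y) ->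
  Icc 0 T x -> is_derive (fun s => tangent_extension T f df s i) x (df x i).
Proof.
  intros HT Hf Hx; apply is_derive_of_eps_delta; intros eps Heps.
  destruct (Hf x Hx eps Heps) as [d [Hd Hy]].
  destruct (Icc_boundary_nbhd T x HT Hx) as [r [Hr Hboundary]].
  exists (Rmin d r); split; [apply Rmin_pos; lra|]; intros y Hyx.
  pose proof (Rmin_l d r); pose proof (Rmin_r d r).
  destruct (Hboundary y ltac:(lra)) as [Hleft Hright].
  rewrite (tangent_extension_in T f df x Hx); unfold tangent_extension.
  destruct (Rlt_dec y 0) as [Hy0|Hy0]; [|destruct (Rlt_dec T y) as [HyT|HyT]].
  - rewrite (Hleft Hy0), Rminus_0_r, Rminus_diag_eq, Rabs_R0 by ring.
    apply Rmult_le_pos; [lra|apply Rabs_pos].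
  - rewrite (Hright HyT), Rminus_diag_eq, Rabs_R0 by ring.
    apply Rmult_le_pos; [lra|apply Rabs_pos].
  - apply Hy; [split; lra|lra].
Qed.

Definition clamp (T t : R) : R := Rmax 0 (Rmin T t).

Lemma clamp_in T t : 0 <= T -> Icc 0 T (clamp T t).
Proof.
  intros HT; unfold clamp, Icc; split; [apply Rmax_l|].
  apply Rmax_lub; [lra|apply Rmin_l].
Qed.

Lemma clamp_id T t : Icc 0 T t -> clamp T t = t.
Proof. intros [H0 HT]; unfold clamp; rewrite Rmin_right, Rmax_right; lra. Qed.

Lemma clamp_lipschitz T x y : Rabs (clamp T y - clamp T x) <= Rabs (y - x).
Proof. unfold clamp, Rmax, Rmin; repeat destruct Rle_dec; split_Rabs; lra. Qed.

Lemma continuous_clamp_comp T f : 0 <= T ->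
  (forall x, Icc 0 T x -> cont_within (Icc 0 T) f x) ->
  forall t, continuous (fun s => f (clamp T s)) t.
Proof.
  intros HT Hf t; apply continuity_pt_filterlim; intros eps Heps.
  destruct (Hf (clamp T t) (clamp_in T t HT) eps Heps) as [d [Hd Hy]].
  exists d; split; [exact Hd|]; intros y [_ Hyt]; simpl in *; unfold R_dist in *.
  apply Hy; [apply clamp_in; exact HT|]; pose proof (clamp_lipschitz T t y); lra.
Qed.

Lemma continuous_dot5 (u v : R -> Vec5) t :
  (forall i, (i < 5)%nat -> continuous (fun s => u s i) t) ->
  (forall i, (i < 5)%nat -> continuous (fun s => v s i) t) ->
  continuous (fun s => dot5 (u s) (v s)) t.
Proof.
  intros Hu Hv; unfold dot5.
  repeat match goal with
  | |- continuous (fun s => _ + _) _ => apply (continuous_plus (V := R_NormedModule))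
  end;
    (apply (continuous_mult (K := R_AbsRing)); [apply Hu|apply Hv]); lia.
Qed.

Lemma is_RInt_derive_Icc (F f : R -> R) T : 0 <= T ->
  (forall t, Icc 0 T t -> is_derive F t (f t)) ->
  (forall t, continuous (fun s => f (clamp T s)) t) ->
  is_RInt f 0 T (F T - F 0).
Proof.
  intros HT HF Hf.
  assert (Hbounds : Rmin 0 T = 0 /\ Rmax 0 T = T)
    by (split; [apply Rmin_left|apply Rmax_right]; lra).
  apply (is_RInt_ext (fun s => f (clamp T s))).
  { destruct Hbounds as [-> ->]; intros x Hx; rewrite clamp_id; [reflexivity|split; lra]. }
  apply (is_RInt_derive F); destruct Hbounds as [-> ->]; intros x Hx; [|apply Hf].
  rewrite clamp_id by exact Hx; apply HF, Hx.
Qed.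

Theorem mainTheorem5 (p : params) (T : R) (q dq ddq tau : R -> Vec5) :
  params_pos p -> 0 < T ->
  (forall (i : nat) t, (i < 5)%nat -> Icc 0 T t ->
     cont_within (Icc 0 T) (fun s => tau s i) t) ->
  (forall (i : nat) t, (i < 5)%nat -> Icc 0 T t ->
     has_deriv_within (Icc 0 T) (fun s => q s i) (dq t i) t) ->
  (forall (i : nat) t, (i < 5)%nat -> Icc 0 T t ->
     has_deriv_within (Icc 0 T) (fun s => dq s i) (ddq t i) t) ->
  (forall (i : nat) t, (i < 5)%nat -> Icc 0 T t ->
     cont_within (Icc 0 T) (fun s => ddq s i) t) ->
  (forall (i : nat) t, (i < 5)%nat -> Icc 0 T t ->
     mv5 (Dmat p (q t)) (ddq t) i + mv5 (Cmat p (q t) (dq t)) (dq t) i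
       + gvec p (q t) i = tau t i) ->
  (forall t, Icc 0 T t ->
     has_deriv_within (Icc 0 T) (fun s => Ham p (q s) (dq s))
       (dot5 (dq t) (tau t)) t)
  /\ is_RInt (fun t => dot5 (dq t) (tau t)) 0 T
       (Ham p (q T) (dq T) - Ham p (q 0) (dq 0))
  /\ (forall Pmin, (forall t, Icc 0 T t -> Pmin <= Pot p (q t)) ->
       RInt (fun t => dot5 (dq t) (tau t)) 0 T >= - Ham p (q 0) (dq 0) + Pmin).
Proof.
  intros Hp HT Htau Hq Hdq _ Heom.
  set (Q := tangent_extension T q dq); set (V := tangent_extension T dq ddq).
  set (E := fun s => Ham p (Q s) (V s)).
  assert (HE : forall t, Icc 0 T t -> E t = Ham p (q t) (dq t)).
  { intros t Ht; unfold E, Q, V; rewrite !tangent_extension_in by exact Ht; reflexivity. }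
  assert (HdE : forall t, Icc 0 T t -> is_derive E t (dot5 (dq t) (tau t))).
  { intros t Ht.
    assert (HQ : Q t = q t) by (apply tangent_extension_in, Ht).
    assert (HV : V t = dq t) by (apply tangent_extension_in, Ht).
    eapply is_derive_eq.
    - apply (is_derive_Ham p Q V (ddq t)); intros i Hi; [rewrite HV|];
        apply is_derive_tangent_extension; auto.
    - rewrite HQ, HV; apply power_balance; intros i Hi; apply Heom; auto. }
  assert (Hint : is_RInt (fun t => dot5 (dq t) (tau t)) 0 T
                   (Ham p (q T) (dq T) - Ham p (q 0) (dq 0))).
  { rewrite <- (HE T), <- (HE 0) by (split; lra).
    apply is_RInt_derive_Icc; [lra|exact HdE|]; intros t.
    apply continuous_dot5; intros i Hi.
    - apply (continuous_clamp_comp T (fun s => dq s i)); [lra|]; intros x Hx.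
      exact (cont_within_of_has_deriv_within _ _ _ _ (Hdq i x Hi Hx)).
    - apply (continuous_clamp_comp T (fun s => tau s i)); [lra|]; intros x Hx.
      exact (Htau i x Hi Hx). }
  split; [|split].
  - intros t Ht; apply (has_deriv_within_ext _ E); auto.
    apply has_deriv_within_of_is_derive, HdE, Ht.
  - exact Hint.
  - intros Pmin HPmin; rewrite (is_RInt_unique _ _ _ _ Hint).
    pose proof (Dmat_form_nonneg p (q T) (dq T) Hp).
    pose proof (HPmin T ltac:(split; lra)).
    unfold Ham; lra.
Qed.
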